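(* Let $U,V$ be Hopf algebras with bijective antipodes, $\langle\,,\rangle:U\otimes V\to k$ a pairing, and let $\gamma:V\to U^{\rm cop}$ be a Hopf algebra map satisfying $\gamma(y)m=\langle S_U^{-1}(m_1),y_3\rangle\langle m_3,y_1\rangle\, m_2\gamma(y_2)$ for all $y\in V$, $m\in U$. Then: (i) The functional $\vartheta\in V^*$, $\vartheta(x)=\langle\gamma(x_1),S_V(x_2)\rangle$, is convolution invertible with inverse $\vartheta^{-1}(x)=\langle\gamma(S_V^2(x_1)),x_2\rangle$, and for all $x\in V$, $\gamma(S_V^2(x))=\vartheta^{-1}(x_1)\gamma(x_2)\vartheta(x_3)$. (ii) The functional $\upsilon\in V^*$, $\upsilon(x)=\langle\gamma(x_2),S_V(x_1)\rangle$, is convolution invertible with inverse $\upsilon^{-1}(x)=\langle\gamma(S_V^2(x_2)),x_1\rangle$, and for all $x\in V$, $\gamma(S_V^2(x))=\upsilon(x_1)\gamma(x_2)\upsilon^{-1}(x_3)$.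
   Context: Sweedler notation, subscripts referring to comultiplication in $U$ and $V$. A pairing satisfies $\langle mn,x\rangle=\langle m,x_1\rangle\langle n,x_2\rangle$, $\langle m,xy\rangle=\langle m_1,x\rangle\langle m_2,y\rangle$, $\langle 1,x\rangle=\varepsilon(x)$, $\langle m,1\rangle=\varepsilon(m)$. $U^{\rm cop}$ denotes $U$ with opposite comultiplication (antipode $S_U^{-1}$); products $\gamma(\cdot)\gamma(\cdot)$ are taken in $U$. *)

(* Hopf algebras over a field k, with comultiplication given
   by an explicit representative in Sweedler form (a finite list of simple
   tensors); all tensor identities are stated via multilinear forms to k,
   which detect equality in tensor products of vector spaces over a field. *)
From mathcomp Require Import all_boot all_order all_algebra.
Set Implicit Arguments. Unset Strict Implicit. Unset Printing Implicit Defensive.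
Import GRing.Theory.
Local Open Scope ring_scope.

Definition sw (H : Type) (W : zmodType) (D : H -> seq (H * H)) (x : H)
  (f : H -> H -> W) : W := \sum_(q <- D x) f q.1 q.2.

Definition sw3 (H : Type) (W : zmodType) (D : H -> seq (H * H)) (x : H)
  (f : H -> H -> H -> W) : W := sw D x (fun a c => sw D a (fun a1 a2 => f a1 a2 c)).

Definition lmap (k : fieldType) (X Y : lmodType k) (f : X -> Y) : Prop :=
  forall (a : k) (x y : X), f (a *: x + y) = a *: f x + f y.

Definition linf (k : fieldType) (X : lmodType k) (f : X -> k) : Prop :=
  forall (a : k) (x y : X), f (a *: x + y) = a * f x + f y.
Definition bilinf (k : fieldType) (X Y : lmodType k) (f : X -> Y -> k) : Prop :=
  (forall y, linf (fun x => f x y)) /\ (forall x, linf (f x)).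
Definition trilinf (k : fieldType) (X : lmodType k) (f : X -> X -> X -> k) : Prop :=
  (forall y z, linf (fun x => f x y z)) /\ (forall x z, linf (fun y => f x y z))
  /\ (forall x y, linf (f x y)).

Definition is_hopf (k : fieldType) (H : algType k) (D : H -> seq (H * H))
  (e : H -> k) (S Si : H -> H) : Prop :=
  [/\ (* Delta is a linear map H -> H (x) H *)
      (forall b : H -> H -> k, bilinf b -> linf (fun x => sw D x b)),
      (forall (t : H -> H -> H -> k), trilinf t -> forall x,
         sw D x (fun a c => sw D a (fun a1 a2 => t a1 a2 c))
         = sw D x (fun a c => sw D c (fun c1 c2 => t a c1 c2))),
      linf e /\ (forall x, sw D x (fun a c => e a *: c) = x
                        /\ sw D x (fun a c => e c *: a) = x),
      [/\ (forall b : H -> H -> k, bilinf b -> forall x y,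
             sw D (x * y) b = sw D x (fun x1 x2 => sw D y (fun y1 y2 => b (x1 * y1) (x2 * y2)))),
          (forall b : H -> H -> k, bilinf b -> sw D 1 b = b 1 1),
          (forall x y, e (x * y) = e x * e y) & e 1 = 1] &
      [/\ lmap S,
          (forall x, sw D x (fun a c => S a * c) = e x *: 1
                  /\ sw D x (fun a c => a * S c) = e x *: 1),
          cancel S Si & cancel Si S]].

Definition is_pairing (k : fieldType) (U V : algType k)
  (DU : U -> seq (U * U)) (eU : U -> k) (DV : V -> seq (V * V)) (eV : V -> k)
  (p : U -> V -> k) : Prop :=
  [/\ bilinf p,
      (forall m n x, p (m * n) x = sw DV x (fun x1 x2 => p m x1 * p n x2)),
      (forall m x y, p m (x * y) = sw DU m (fun m1 m2 => p m1 x * p m2 y)),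
      (forall x, p 1 x = eV x) &
      (forall m, p m 1 = eU m)].

(* Hopf algebra map g : V -> U^cop (U with opposite comultiplication,
   antipode SU^-1); products are taken in U. *)
Definition is_hopf_map_cop (k : fieldType) (U V : algType k)
  (DU : U -> seq (U * U)) (eU : U -> k) (SUi : U -> U)
  (DV : V -> seq (V * V)) (eV : V -> k) (SV : V -> V) (g : V -> U) : Prop :=
  [/\ lmap g,
      (forall x y, g (x * y) = g x * g y) /\ g 1 = 1,
      (forall b : U -> U -> k, bilinf b -> forall y,
         sw DU (g y) b = sw DV y (fun y1 y2 => b (g y2) (g y1))),
      (forall y, eU (g y) = eV y) &
      (forall y, g (SV y) = SUi (g y))].

(* Write r(w, y) := <g w, y>.  The pairing axioms and the Hopf-map property of g make r a
   skew pairing of V with itself, convolution invertible with inverse r(S w, y), and the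
   commutation rule for g turns into the quasi-commutativity
     r(w1, y1) g(w2 y2) = g(y1 w1) r(w2, y2).
   So r plays the role of a coquasitriangular structure and theta, upsilon that of Drinfeld's
   element, and the argument is Drinfeld's: quasi-commutativity yields the intertwining
   relations theta * (g o S^2) = g * theta and upsilon * g = (g o S^2) * upsilon (convolution
   products), which give one of the two inverse identities at once; the other one follows from
   r(S^2 v, -) * theta = theta * r(v, -) and its analogue for upsilon.  Combining inverse and
   intertwining relation gives the conjugation formula for g o S^2.
   Sweedler identities are only accessible through linear forms, and identities in U are
   recovered because linear forms separate points (Zorn's lemma on graphs of partial linear
   forms). *)

From mathcomp Require Import all_boot all_order all_algebra.
From mathcomp Require Import ring.
From mathcomp Require boolp classical_sets.
Import GRing.Theory.
Local Open Scope ring_scope.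
Set Implicit Arguments. Unset Strict Implicit. Unset Printing Implicit Defensive.

Module LinearSeparation.
Import boolp classical_sets.
Local Open Scope classical_set_scope.

Section Separation.
Variables (k : fieldType) (X : lmodType k).

Definition linear_graph (w : X) (G : set (X * k)) :=
  [/\ (forall x a b, G (x, a) -> G (x, b) -> a = b),
      (forall x a y b c, G (x, a) -> G (y, b) -> G (c *: x + y, c * a + b)) &
      G (w, 1)].

Lemma linear_graph0 w G : linear_graph w G -> G (0, 0).
Proof.
case=> _ Glin Gw; have := Glin _ _ _ _ (-1) Gw Gw.
by rewrite scaleN1r addNr mulN1r addNr.
Qed.

(* [set0] is admitted because [Zorn_bigcup] also takes the union of the empty chain. *)
Lemma linear_graph_bigcup w (F : set (set (X * k))) :
  F `<=` (fun G => G = set0 \/ linear_graph w G) -> total_on F subset ->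
  let B := \bigcup_(G in F) G in B = set0 \/ linear_graph w B.
Proof.
move=> FP Ftot /=.
have [allE|] := pselect (forall G, F G -> G = set0).
  by left; apply/seteqP; split => // q [G FG]; rewrite (allE _ FG).
move=> /existsNP [G0] /not_implyP [FG0 G0n].
have Fgraph G : F G -> forall q, G q -> linear_graph w G.
  by move=> FG q Gq; case: (FP _ FG) => // G0e; rewrite G0e in Gq.
have G0g : linear_graph w G0 by case: (FP _ FG0) => // /G0n.
right; split.
- move=> x a b [G1 F1 h1] [G2 F2 h2].
  case: (Ftot _ _ F1 F2) => sub.
  + by case: (Fgraph _ F2 _ h2) => Gfun _ _; apply: Gfun (sub _ h1) h2.
  + by case: (Fgraph _ F1 _ h1) => Gfun _ _; apply: Gfun h1 (sub _ h2).
- move=> x a y b c [G1 F1 h1] [G2 F2 h2].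
  case: (Ftot _ _ F1 F2) => sub.
  + by exists G2 => //; case: (Fgraph _ F2 _ h2) => _ Glin _; apply: Glin (sub _ h1) h2.
  + by exists G1 => //; case: (Fgraph _ F1 _ h1) => _ Glin _; apply: Glin h1 (sub _ h2).
- by exists G0 => //; case: G0g.
Qed.

Lemma linear_graph_line w : w != 0 ->
  linear_graph w (fun q => exists c : k, q = (c *: w, c)).
Proof.
move=> w0; split.
- move=> x a b [c1 /pair_equal_spec[-> ->]] [c2 /pair_equal_spec[ex ->]].
  move/eqP: ex; rewrite -subr_eq0 -scalerBl scaler_eq0 (negbTE w0) orbF subr_eq0.
  by move/eqP.
- move=> x a y b c [c1 /pair_equal_spec[-> ->]] [c2 /pair_equal_spec[-> ->]].
  by exists (c * c1 + c2); rewrite scalerDl scalerA.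
- by exists 1; rewrite scale1r.
Qed.

Lemma linear_graph_extend w G x0 : linear_graph w G -> (forall a, ~ G (x0, a)) ->
  linear_graph w (fun q => exists y a c, G (y, a) /\ q = (y + c *: x0, a)).
Proof.
move=> Gg nx; have G00 := linear_graph0 Gg; case: Gg => Gfun Glin Gw; split.
- move=> x a b [y1 [a1 [c1 [h1 /pair_equal_spec[ex ->]]]]].
  move=> [y2 [a2 [c2 [h2 /pair_equal_spec[ex2 ->]]]]].
  have [c12|c12] := eqVneq c1 c2.
    by move: ex2; rewrite ex c12 => /addIr ey; apply: (Gfun y1 a1 a2 h1); rewrite ey.
  exfalso; apply: (nx ((c1 - c2)^-1 * (- a1 + a2))).
  have := Glin _ _ _ _ ((c1 - c2)^-1) (Glin _ _ _ _ (-1) h1 h2) G00.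
  rewrite !addr0 mulN1r scaleN1r.
  suff -> : x0 = (c1 - c2)^-1 *: (- y1 + y2) by [].
  apply: (@scalerI _ _ (c1 - c2)); first by rewrite subr_eq0.
  rewrite scalerA divff ?subr_eq0 // scale1r scalerBl.
  apply/eqP; rewrite subr_eq -(addKr y1 (c1 *: x0)) -ex ex2.
  by rewrite addrA.
- move=> x a y b c [y1 [a1 [c1 [h1 /pair_equal_spec[-> ->]]]]].
  move=> [y2 [a2 [c2 [h2 /pair_equal_spec[-> ->]]]]].
  exists (c *: y1 + y2), (c * a1 + a2), (c * c1 + c2); split; first exact: Glin.
  by congr (_, _); rewrite scalerDr scalerA scalerDl addrACA.
- by exists w, 1, 0; split => //; rewrite scale0r addr0.
Qed.

Lemma exists_linf_eq1 (w : X) : w != 0 -> exists f : X -> k, linf f /\ f w = 1.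
Proof.
move=> w0.
have [A [[A0|Ag] Amax]] :=
  Zorn_bigcup (fun F FP Ftot => @linear_graph_bigcup w F FP Ftot).
  exfalso; apply: (Amax _ _ (or_intror (linear_graph_line w0))).
  rewrite A0; split; first by [].
  by move=> /(_ (w, 1)) hw; have [] := hw; exists 1; rewrite scale1r.
have Atot x : exists a, A (x, a).
  apply: contrapT => nx.
  have nx' a : ~ A (x, a) by move=> hA; apply: nx; exists a.
  apply: (Amax _ _ (or_intror (linear_graph_extend Ag nx'))); split.
    by move=> [y a] hA; exists y, a, 0; rewrite scale0r addr0.
  move=> /(_ (x, 0)) hx; apply: (nx' 0); apply: hx.
  by exists 0, 0, 1; split; [exact: linear_graph0 Ag | rewrite scale1r add0r].
case: Ag => Afun Alin Aw.
pose f x := projT1 (cid (Atot x)).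
have fP x : A (x, f x) by rewrite /f; case: (cid _).
exists f; split; first by move=> c x y; apply: Afun (fP _) _; exact: Alin (fP _) (fP _).
exact: Afun (fP _) Aw.
Qed.

Lemma linf_separates (u v : X) : (forall f : X -> k, linf f -> f u = f v) -> u = v.
Proof.
move=> h; apply/eqP; rewrite -subr_eq0; apply/negP => /negP nz.
have [f [lf f1]] := exists_linf_eq1 nz.
have fB : f (u - v) = f u - f v.
  by have := lf (-1) v u; rewrite scaleN1r mulN1r addrC => ->; rewrite addrC.
by move: f1; rewrite fB (h f lf) subrr => /eqP; rewrite eq_sym oner_eq0.
Qed.

End Separation.
End LinearSeparation.
Import LinearSeparation.

Section LinearForms.
Variable k : fieldType.
Implicit Types X Y Z : lmodType k.

Lemma linf_mulr X (f : X -> k) c : linf f -> linf (fun x => f x * c).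
Proof. by move=> hf a x y; rewrite hf mulrDl mulrA. Qed.
Lemma linf_mull X (f : X -> k) c : linf f -> linf (fun x => c * f x).
Proof. by move=> hf a x y; rewrite hf mulrDr mulrCA. Qed.
Lemma linf_comp X Y (f : Y -> k) (G : X -> Y) : linf f -> lmap G -> linf (fun x => f (G x)).
Proof. by move=> hf hG a x y; rewrite hG hf. Qed.
Lemma linf_bilinl X Y Z (b : Y -> Z -> k) (G : X -> Y) z :
  bilinf b -> lmap G -> linf (fun x => b (G x) z).
Proof. by case=> hb _ hG a x y; rewrite hG hb. Qed.
Lemma linf_bilinr X Y Z (b : Y -> Z -> k) (G : X -> Z) m :
  bilinf b -> lmap G -> linf (fun x => b m (G x)).
Proof. by case=> _ hb hG a x y; rewrite hG hb. Qed.
Lemma linf_bilin X Y (b : X -> Y -> k) m : bilinf b -> linf (b m).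
Proof. by case. Qed.

Lemma lmap_id X : lmap (fun x : X => x).
Proof. by []. Qed.
Lemma lmap_comp X Y Z (f : Y -> Z) (G : X -> Y) : lmap f -> lmap G -> lmap (fun x => f (G x)).
Proof. by move=> hf hG a x y; rewrite hG hf. Qed.
Lemma lmap_mulr (A : algType k) X (G : X -> A) u : lmap G -> lmap (fun x => G x * u).
Proof. by move=> hG a x y; rewrite hG mulrDl scalerAl. Qed.
Lemma lmap_mull (A : algType k) X (G : X -> A) u : lmap G -> lmap (fun x => u * G x).
Proof. by move=> hG a x y; rewrite hG mulrDr scalerAr. Qed.
Lemma lmap_mul (A : algType k) (u : A) : lmap ( *%R u).
Proof. by move=> a x y; rewrite mulrDr scalerAr. Qed.
Lemma lmap_scaler X Y (G : X -> Y) c : lmap G -> lmap (fun x => c *: G x).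
Proof. by move=> hG a x y; rewrite hG scalerDr !scalerA mulrC. Qed.

Lemma linf0 X (f : X -> k) : linf f -> f 0 = 0.
Proof.
move=> hf; have := hf 1 0 0; rewrite scale1r addr0 mul1r => e.
by apply: (@addrI _ (f 0)); rewrite -e addr0.
Qed.
Lemma linfZ X (f : X -> k) c x : linf f -> f (c *: x) = c * f x.
Proof. by move=> hf; rewrite -[c *: x]addr0 hf linf0 // addr0. Qed.
Lemma linf_sum X (f : X -> k) I (r : seq I) (F : I -> X) :
  linf f -> f (\sum_(i <- r) F i) = \sum_(i <- r) f (F i).
Proof.
move=> hf; elim: r => [|a r IH]; first by rewrite !big_nil linf0.
by rewrite !big_cons -IH -{1}[F a]scale1r hf mul1r.
Qed.
End LinearForms.

Section Sweedler.
Variables (k : fieldType) (H : lmodType k) (D : H -> seq (H * H)).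

Lemma eq_sw (W : zmodType) x (F G : H -> H -> W) :
  (forall a b, F a b = G a b) -> sw D x F = sw D x G.
Proof. by move=> eFG; apply: eq_bigr => q _; apply: eFG. Qed.
Lemma sw_mulr x (F : H -> H -> k) c : c * sw D x F = sw D x (fun a b => c * F a b).
Proof. by rewrite /sw mulr_sumr. Qed.
Lemma sw_mull x (F : H -> H -> k) c : sw D x F * c = sw D x (fun a b => F a b * c).
Proof. by rewrite /sw mulr_suml. Qed.
Lemma linf_sw (X : lmodType k) (f : X -> k) x (F : H -> H -> X) :
  linf f -> f (sw D x F) = sw D x (fun a b => f (F a b)).
Proof. by move=> hf; rewrite /sw linf_sum. Qed.
Lemma linf_sw3Z (X : lmodType k) (f : X -> k) x (c : H -> H -> H -> k) (v : H -> H -> H -> X) :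
  linf f -> f (sw3 D x (fun a b d => c a b d *: v a b d))
            = sw3 D x (fun a b d => c a b d * f (v a b d)).
Proof.
move=> hf; rewrite /sw3 linf_sw //; apply: eq_sw => a d.
by rewrite linf_sw //; apply: eq_sw => a1 a2; rewrite linfZ.
Qed.
Lemma linf_sw_body (X : lmodType k) w (F : X -> H -> H -> k) :
  (forall a c, linf (fun x => F x a c)) -> linf (fun x => sw D w (F x)).
Proof.
by move=> hF a x y; rewrite /sw mulr_sumr -big_split; apply: eq_bigr => q _; exact: hF.
Qed.
Lemma linf_sw_arg (X : lmodType k) (b : H -> H -> k) (G : X -> H) :
  (forall b', bilinf b' -> linf (fun x => sw D x b')) ->
  bilinf b -> lmap G -> linf (fun x => sw D (G x) b).
Proof. by move=> hD hb; apply: (linf_comp (f := fun y => sw D y b)); exact: hD. Qed.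
End Sweedler.

Lemma sw_swap (H1 H2 : Type) (W : zmodType) (D1 : H1 -> seq (H1 * H1))
  (D2 : H2 -> seq (H2 * H2)) x y (F : H1 -> H1 -> H2 -> H2 -> W) :
  sw D1 x (fun a b => sw D2 y (fun c d => F a b c d))
  = sw D2 y (fun c d => sw D1 x (fun a b => F a b c d)).
Proof. exact: exchange_big. Qed.

Create HintDb linear.
Ltac linear_leaf := solve [assumption | eauto with linear].
Ltac linear_atom := first [linear_leaf | apply: linf_bilin; linear_leaf].
(* Discharges the linearity side conditions of Sweedler manipulations by following the
   syntax of the form; the atomic maps come from the hint database [linear]. *)
Ltac linearity :=
  cbv beta; intros;
  lazymatch goal with
  | |- trilinf _ => split; [|split]; linearity
  | |- bilinf _ => split; linearity
  | |- linf (fun _ => _ * _) =>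
      first [apply: linf_mulr; linearity | apply: linf_mull; linearity]
  | |- linf (fun _ => sw _ _ _) =>
      first [apply: linf_sw_arg; [linear_leaf | linearity | linearity]
            | apply: linf_sw_body; linearity]
  | |- linf (fun _ => _ _ _) =>
      first [apply: linf_bilinl; [linear_atom | linearity]
            | apply: linf_bilinr; [linear_atom | linearity]
            | apply: linf_comp; [linear_atom | linearity]]
  | |- linf (fun x => ?f (@?G x)) =>
      first [linear_atom | apply: (linf_comp (f := f) (G := G)); [linear_atom | linearity]]
  | |- linf _ => linear_atom
  | |- lmap (fun x => x) => exact: lmap_id
  | |- lmap ( *%R _ ) => exact: lmap_mul
  | |- lmap (fun _ => _ * _) =>
      first [apply: lmap_mulr; linearity | apply: lmap_mull; linearity]
  | |- lmap (fun _ => _ *: _) => apply: lmap_scaler; linearity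
  | |- lmap (fun x => ?f (@?G x)) =>
      first [linear_leaf | apply: (lmap_comp (f := f) (G := G)); [linear_leaf | linearity]]
  | |- lmap _ => linear_leaf
  end.

Section HopfAxioms.
Variables (k : fieldType) (H : algType k) (D : H -> seq (H * H)) (e : H -> k).
Variables (S Si : H -> H).
Hypothesis hH : is_hopf D e S Si.

Lemma linf_comul (b : H -> H -> k) : bilinf b -> linf (fun x => sw D x b).
Proof. by case: hH => hD *; exact: hD. Qed.
Lemma coassoc (t : H -> H -> H -> k) x : trilinf t ->
  sw D x (fun a c => sw D a (fun a1 a2 => t a1 a2 c))
  = sw D x (fun a c => sw D c (fun c1 c2 => t a c1 c2)).
Proof. by case: hH => _ hD _ _ _ ht; exact: hD. Qed.
Lemma linf_counit : linf e.
Proof. by case: hH => _ _ [he _] *. Qed.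
Lemma counit_sw x : sw D x (fun a c => e a *: c) = x /\ sw D x (fun a c => e c *: a) = x.
Proof. by case: hH => _ _ [_ he] *. Qed.
Lemma comulM (b : H -> H -> k) x y : bilinf b ->
  sw D (x * y) b = sw D x (fun x1 x2 => sw D y (fun y1 y2 => b (x1 * y1) (x2 * y2))).
Proof. by move=> hb; case: hH => _ _ _ [hD _ _ _] _; exact: hD. Qed.
Lemma comul1 (b : H -> H -> k) : bilinf b -> sw D 1 b = b 1 1.
Proof. by move=> hb; case: hH => _ _ _ [_ hD _ _] _; exact: hD. Qed.
Lemma counitM x y : e (x * y) = e x * e y.
Proof. by case: hH => _ _ _ [_ _ he _] *. Qed.
Lemma counit1 : e 1 = 1.
Proof. by case: hH => _ _ _ [_ _ _ he] *. Qed.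
Lemma lmap_antipode : lmap S.
Proof. by case: hH => _ _ _ _ [hS _ _ _]. Qed.
Lemma antipode_sw x :
  sw D x (fun a c => S a * c) = e x *: 1 /\ sw D x (fun a c => a * S c) = e x *: 1.
Proof. by case: hH => _ _ _ _ [_ hS _ _]. Qed.
Lemma antipodeK : cancel S Si.
Proof. by case: hH => _ _ _ _ [_ _ hS _]. Qed.
Lemma antipodeVK : cancel Si S.
Proof. by case: hH => _ _ _ _ [_ _ _ hS]. Qed.
Lemma lmap_antipodeV : lmap Si.
Proof. by move=> a x y; apply: (can_inj antipodeK); rewrite lmap_antipode !antipodeVK. Qed.

Lemma sw_counitl (f : H -> k) x : linf f -> sw D x (fun a c => e a * f c) = f x.
Proof.
by move=> hf; rewrite -{2}(proj1 (counit_sw x)) linf_sw //; apply: eq_sw => a c; rewrite linfZ.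
Qed.
Lemma sw_counitr (f : H -> k) x : linf f -> sw D x (fun a c => f a * e c) = f x.
Proof.
move=> hf; rewrite -{2}(proj2 (counit_sw x)) linf_sw //.
by apply: eq_sw => a c; rewrite linfZ // mulrC.
Qed.
Lemma sw_antipodel (f : H -> k) x : linf f -> sw D x (fun a c => f (S a * c)) = e x * f 1.
Proof. by move=> hf; rewrite -linf_sw // (proj1 (antipode_sw x)) linfZ. Qed.
Lemma sw_antipoder (f : H -> k) x : linf f -> sw D x (fun a c => f (a * S c)) = e x * f 1.
Proof. by move=> hf; rewrite -linf_sw // (proj2 (antipode_sw x)) linfZ. Qed.
End HopfAxioms.

#[global] Hint Resolve linf_comul linf_counit lmap_antipode lmap_antipodeV : linear.

Section HopfAntipode.
Variables (k : fieldType) (H : algType k) (D : H -> seq (H * H)) (e : H -> k).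
Variables (S Si : H -> H).
Hypothesis hH : is_hopf D e S Si.
#[local] Hint Resolve hH : linear.

Lemma antipode1 : S 1 = 1.
Proof.
apply: linf_separates => f hf.
have -> : f (S 1) = sw D 1 (fun a c => f (S a * c)) by rewrite (comul1 hH) ?mulr1 //; linearity.
by rewrite (sw_antipodel hH) // (counit1 hH) mul1r.
Qed.

Lemma counit_antipode x : e (S x) = e x.
Proof.
rewrite -(sw_counitr hH (f := fun t => e (S t))); last by linearity.
transitivity (sw D x (fun a c => e (S a * c))); first by apply: eq_sw => a c; rewrite (counitM hH).
by rewrite (sw_antipodel hH (f := e)) ?(counit1 hH) ?mulr1 //; linearity.
Qed.

Lemma counit_sw4 (b : H -> H -> k) y u v : bilinf b ->
  e y * b u v = sw D y (fun y1 y' => sw D y' (fun y2 y'' => sw D y'' (fun y3 y4 =>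
     b (u * y1 * S y4) (v * (y2 * S y3))))).
Proof.
move=> hb.
transitivity (sw D y (fun y1 y' => b (u * y1 * S y') v)).
  transitivity (sw D y (fun y1 y' => b (u * (y1 * S y')) v)).
    by rewrite (sw_antipoder hH (f := fun z => b (u * z) v)) ?mulr1 1?mulrC //; linearity.
  by apply: eq_sw => y1 y'; rewrite mulrA.
apply: eq_sw => y1 y'.
rewrite -(coassoc hH (t := fun y2 y3 y4 => b (u * y1 * S y4) (v * (y2 * S y3)))); last by linearity.
transitivity (sw D y' (fun m y4 => e m * b (u * y1 * S y4) v)).
  by rewrite (sw_counitl hH (f := fun z => b (u * y1 * S z) v)) //; linearity.
apply: eq_sw => m y4.
by rewrite (sw_antipoder hH (f := fun z => b (u * y1 * S y4) (v * z))) ?mulr1 //; linearity.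
Qed.

Lemma counitM_sw (f : H -> k) x y z : linf f -> e x * e y * f z =
  sw D x (fun x1 x2 => sw D y (fun y1 y2 => f (z * (x1 * (y1 * S y2) * S x2)))).
Proof.
move=> hf.
transitivity (sw D x (fun x1 x2 => e y * f (z * (x1 * 1 * S x2)))); last first.
  apply: eq_sw => x1 x2.
  by rewrite (sw_antipoder hH (f := fun w => f (z * (x1 * w * S x2)))) //; linearity.
rewrite -sw_mulr; under eq_sw => x1 x2 do rewrite mulr1.
rewrite (sw_antipoder hH (f := fun w => f (z * w))); last by linearity.
by rewrite mulr1 mulrCA mulrA.
Qed.

Lemma antipodeM x y : S (x * y) = S y * S x.
Proof.
apply: linf_separates => f hf.
have counit_split : f (S (x * y)) =
    sw D x (fun x1 x' => sw D y (fun y1 y' => f (S (x1 * y1)) * (e x' * e y'))).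
  transitivity (sw D x (fun x1 x' => f (S (x1 * y)) * e x')).
    by rewrite (sw_counitr hH) //; linearity.
  apply: eq_sw => x1 x'.
  transitivity (sw D y (fun y1 y' => f (S (x1 * y1)) * e y') * e x').
    by rewrite (sw_counitr hH) //; linearity.
  by rewrite sw_mull; apply: eq_sw => y1 y'; ring.
have counit_expand :
    sw D x (fun x1 x' => sw D y (fun y1 y' => f (S (x1 * y1)) * (e x' * e y'))) =
    sw D x (fun x1 x' => sw D x' (fun x2 x3 => sw D y (fun y1 y' => sw D y' (fun y2 y3 =>
      f (S (x1 * y1) * (x2 * (y2 * S y3) * S x3)))))).
  apply: eq_sw => x1 x'; rewrite sw_swap; apply: eq_sw => y1 y'.
  by rewrite mulrC counitM_sw.
rewrite counit_split counit_expand.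
rewrite -(coassoc hH (t := fun x1 x2 x3 => sw D y (fun y1 y' => sw D y' (fun y2 y3 =>
  f (S (x1 * y1) * (x2 * (y2 * S y3) * S x3)))))); last by linearity.
transitivity (sw D x (fun a x3 => sw D y (fun b y3 => e a * e b * f (S y3 * S x3)))); last first.
  transitivity (sw D x (fun a x3 => e a * f (S y * S x3))).
    2: by rewrite (sw_counitl hH) //; linearity.
  apply: eq_sw => a x3; rewrite -(sw_counitl hH (f := fun z => f (S z * S x3))); last by linearity.
  by rewrite sw_mulr; apply: eq_sw => b y3; ring.
apply: eq_sw => a x3.
rewrite sw_swap; under eq_sw => c d do rewrite sw_swap.
rewrite -(coassoc hH (t := fun y1 y2 y3 => sw D a (fun x1 x2 =>
  f (S (x1 * y1) * (x2 * (y2 * S y3) * S x3))))); last by linearity.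
apply: eq_sw => b y3.
transitivity (sw D (a * b) (fun u v => f (S u * v * (S y3 * S x3)))).
  rewrite (comulM hH); last by linearity.
  by rewrite sw_swap; apply: eq_sw => x1 x2; apply: eq_sw => y1 y2; rewrite !mulrA.
rewrite (sw_antipodel hH (f := fun z => f (z * (S y3 * S x3)))); last by linearity.
by rewrite (counitM hH) mul1r.
Qed.

Lemma comul_antipode (b : H -> H -> k) x : bilinf b ->
  sw D (S x) b = sw D x (fun a c => b (S c) (S a)).
Proof.
move=> hb.
transitivity (sw D x (fun p w => sw D (S p) b * e w)).
  by rewrite (sw_counitr hH (f := fun z => sw D (S z) b)) //; linearity.
transitivity (sw D x (fun p w => sw D (S p) (fun u v => sw D w (fun w1 w' => sw D w' (fun w2 y'' =>
   sw D y'' (fun w3 w4 => b (u * w1 * S w4) (v * (w2 * S w3)))))))).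
  by apply: eq_sw => p w; rewrite sw_mull; apply: eq_sw => u v; rewrite mulrC counit_sw4.
under eq_sw => p w do under eq_sw => u v do
  (rewrite -(coassoc hH (t := fun w1 w2 y'' => sw D y'' (fun w3 w4 =>
     b (u * w1 * S w4) (v * (w2 * S w3))))); last by linearity).
under eq_sw => p w do rewrite sw_swap.
rewrite -(coassoc hH (t := fun p q y'' => sw D (S p) (fun u v => sw D q (fun a1 a2 =>
  sw D y'' (fun w3 w4 => b (u * a1 * S w4) (v * (a2 * S w3))))))); last by linearity.
rewrite -(sw_counitl hH (f := fun B => sw D B (fun a c => b (S c) (S a)))); last by linearity.
apply: eq_sw => A B.
under eq_sw => p q do under eq_sw => u v do rewrite sw_swap.
under eq_sw => p q do rewrite sw_swap.
rewrite sw_swap sw_mulr; apply: eq_sw => w3 w4.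
transitivity (sw D A (fun p q => sw D (S p * q) (fun s t => b (s * S w4) (t * S w3)))).
  apply: eq_sw => p q; rewrite (comulM hH); last by linearity.
  by apply: eq_sw => u v; apply: eq_sw => a1 a2; rewrite !mulrA.
rewrite (sw_antipodel hH (f := fun z => sw D z (fun s t => b (s * S w4) (t * S w3))));
  last by linearity.
by rewrite (comul1 hH) ?mul1r //; linearity.
Qed.
End HopfAntipode.

Section Pairing.
Variables (k : fieldType) (U V : algType k).
Variables (DU : U -> seq (U * U)) (eU : U -> k) (SU SUi : U -> U).
Variables (DV : V -> seq (V * V)) (eV : V -> k) (SV SVi : V -> V).
Variable p : U -> V -> k.
Hypotheses (hU : is_hopf DU eU SU SUi) (hV : is_hopf DV eV SV SVi)
  (hp : is_pairing DU eU DV eV p).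

Lemma bilinf_pairing : bilinf p. Proof. by case: hp. Qed.
Lemma pairingMl m n x : p (m * n) x = sw DV x (fun x1 x2 => p m x1 * p n x2).
Proof. by case: hp. Qed.
Lemma pairingMr m x y : p m (x * y) = sw DU m (fun m1 m2 => p m1 x * p m2 y).
Proof. by case: hp. Qed.
Lemma pairing1l x : p 1 x = eV x.
Proof. by case: hp. Qed.
Lemma pairing1r m : p m 1 = eU m.
Proof. by case: hp. Qed.

#[local] Hint Resolve hU hV bilinf_pairing : linear.

Lemma pairing_antipode m y : p (SU m) y = p m (SV y).
Proof.
transitivity (sw DU m (fun m1 m' => sw DV y (fun y1 y' => p (SU m1) y1 * (eU m' * eV y')))).
  transitivity (sw DU m (fun m1 m' => p (SU m1) y * eU m')).
    by rewrite (sw_counitr hU) //; linearity.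
  apply: eq_sw => m1 m'.
  transitivity (sw DV y (fun y1 y' => p (SU m1) y1 * eV y') * eU m').
    by rewrite (sw_counitr hV) //; linearity.
  by rewrite sw_mull; apply: eq_sw => y1 y'; ring.
have counit_expand m' y' : eU m' * eV y' =
    sw DU m' (fun m2 m3 => sw DV y' (fun y2 y3 => p m2 y2 * p m3 (SV y3))).
  rewrite sw_swap.
  transitivity (sw DV y' (fun y2 y3 => p m' (y2 * SV y3))).
    by rewrite (sw_antipoder hV (f := p m')) ?pairing1r 1?mulrC //; linearity.
  by apply: eq_sw => y2 y3; rewrite pairingMr.
under eq_sw => m1 m' do under eq_sw => y1 y' do
  (rewrite counit_expand sw_mulr; under eq_sw => m2 m3 do rewrite sw_mulr).
under eq_sw => m1 m' do rewrite sw_swap.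
rewrite -(coassoc hU (t := fun m1 m2 m3 => sw DV y (fun y1 y' => sw DV y' (fun y2 y3 =>
   p (SU m1) y1 * (p m2 y2 * p m3 (SV y3)))))); last by linearity.
rewrite -(sw_counitl hU (f := fun z => p z (SV y))); last by linearity.
apply: eq_sw => a m3.
under eq_sw => m1 m2 do
  (rewrite -(coassoc hV (t := fun y1 y2 y3 => p (SU m1) y1 * (p m2 y2 * p m3 (SV y3))));
   last by linearity).
rewrite sw_swap -(sw_counitl hV (f := fun z => p m3 (SV z))); last by linearity.
rewrite sw_mulr; apply: eq_sw => c y3.
transitivity (sw DU a (fun m1 m2 => p (SU m1 * m2) c) * p m3 (SV y3)).
  rewrite sw_mull; apply: eq_sw => m1 m2; rewrite pairingMl sw_mull.
  by apply: eq_sw => y1 y2; rewrite mulrA.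
by rewrite (sw_antipodel hU (f := fun z => p z c)) ?pairing1l ?mulrA //; linearity.
Qed.

Lemma pairing_antipodeV m y : p (SUi m) y = p m (SVi y).
Proof. by rewrite -{2}(antipodeVK hU m) pairing_antipode (antipodeVK hV). Qed.
End Pairing.

Section HopfMapCop.
Variables (k : fieldType) (U V : algType k).
Variables (DU : U -> seq (U * U)) (eU : U -> k) (SUi : U -> U).
Variables (DV : V -> seq (V * V)) (eV : V -> k) (SV : V -> V) (g : V -> U).
Hypothesis hg : is_hopf_map_cop DU eU SUi DV eV SV g.

Lemma lmap_g : lmap g. Proof. by case: hg. Qed.
Lemma gM x y : g (x * y) = g x * g y.
Proof. by case: hg => _ [gM _]. Qed.
Lemma g1 : g 1 = 1.
Proof. by case: hg => _ [_ g1]. Qed.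
Lemma comul_g (b : U -> U -> k) y : bilinf b ->
  sw DU (g y) b = sw DV y (fun y1 y2 => b (g y2) (g y1)).
Proof. by move=> hb; case: hg => _ _ hD _ _; apply: hD. Qed.
Lemma counit_g y : eU (g y) = eV y.
Proof. by case: hg. Qed.
Lemma g_antipode y : g (SV y) = SUi (g y).
Proof. by case: hg. Qed.
End HopfMapCop.

Section Main.
Variables (k : fieldType) (U V : algType k).
Variables (DU : U -> seq (U * U)) (eU : U -> k) (SU SUi : U -> U).
Variables (DV : V -> seq (V * V)) (eV : V -> k) (SV SVi : V -> V).
Variables (p : U -> V -> k) (g : V -> U).
Hypotheses (hU : is_hopf DU eU SU SUi) (hV : is_hopf DV eV SV SVi)
  (hp : is_pairing DU eU DV eV p) (hg : is_hopf_map_cop DU eU SUi DV eV SV g).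
Hypothesis hgm : forall (y : V) (m : U),
     g y * m = sw3 DU m (fun m1 m2 m3 => sw3 DV y (fun y1 y2 y3 =>
                 (p (SUi m1) y3 * p m3 y1) *: (m2 * g y2))).

#[local] Hint Resolve hU hV hp hg bilinf_pairing lmap_g : linear.

Lemma pgMl w v y : p (g (w * v)) y = sw DV y (fun y1 y2 => p (g w) y1 * p (g v) y2).
Proof. by rewrite (gM hg) (pairingMl hp). Qed.
Lemma pgMr w y z : p (g w) (y * z) = sw DV w (fun w1 w2 => p (g w2) y * p (g w1) z).
Proof. rewrite (pairingMr hp) (comul_g hg (b := fun a c => p a y * p c z)) //; linearity. Qed.
Lemma pg1l y : p (g 1) y = eV y. Proof. by rewrite (g1 hg) (pairing1l hp). Qed.
Lemma pg1r w : p (g w) 1 = eV w. Proof. by rewrite (pairing1r hp) (counit_g hg). Qed.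
Lemma pg_antipodeV w y : p (g (SV w)) y = p (g w) (SVi y).
Proof. by rewrite (g_antipode hg) (pairing_antipodeV hU hV hp). Qed.
Lemma pg_antipode2 a b : p (g (SV a)) (SV b) = p (g a) b.
Proof. by rewrite pg_antipodeV (antipodeK hV). Qed.

Lemma gM_exchange (f : U -> k) y w : linf f -> f (g (y * w)) =
  sw DV w (fun w1 w2 => sw DV w2 (fun u1 u2 => sw DV y (fun b y3 => sw DV b (fun y1 y2 =>
    p (g (SV u2)) y3 * p (g w1) y1 * f (g (u1 * y2)))))).
Proof.
move=> hf.
rewrite (gM hg) hgm /sw3 linf_sw //.
under eq_sw => a c do (rewrite linf_sw //; under eq_sw => a1 a2 do
  (rewrite linf_sw //; under eq_sw => b y3 do
    (rewrite linf_sw //; under eq_sw => y1 y2 do rewrite linfZ //))).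
rewrite (comul_g hg); last by linearity.
under eq_sw => w1 w2 do (rewrite (comul_g hg); last by linearity).
apply: eq_sw => w1 w2; apply: eq_sw => u1 u2; apply: eq_sw => b y3; apply: eq_sw => y1 y2.
by rewrite (g_antipode hg) (gM hg).
Qed.

Lemma pg_conv_antipodel w y :
  sw DV w (fun w1 w2 => sw DV y (fun y1 y2 => p (g (SV w1)) y1 * p (g w2) y2)) = eV w * eV y.
Proof.
under eq_sw => w1 w2 do rewrite -pgMl.
by rewrite (sw_antipodel hV (f := fun z => p (g z) y)) ?pg1l //; linearity.
Qed.

Lemma pg_quasicomm (f : U -> k) y w : linf f ->
  sw DV w (fun w1 w2 => sw DV y (fun y1 y2 => f (g (y1 * w1)) * p (g w2) y2)) =
  sw DV w (fun w1 w2 => sw DV y (fun y1 y2 => p (g w1) y1 * f (g (w2 * y2)))).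
Proof.
move=> hf.
transitivity (sw DV w (fun a w4 => sw DV a (fun w1 a' => sw DV a' (fun u1 u2 =>
   sw DV y (fun b y4 => sw DV b (fun b' y3 => sw DV b' (fun y1 y2 =>
     p (g (SV u2)) y3 * p (g w1) y1 * f (g (u1 * y2)) * p (g w4) y4))))))).
  apply: eq_sw => a w4.
  transitivity (sw DV y (fun b y4 => sw DV a (fun w1 a' => sw DV a' (fun u1 u2 =>
     sw DV b (fun b' y3 => sw DV b' (fun y1 y2 =>
     p (g (SV u2)) y3 * p (g w1) y1 * f (g (u1 * y2)) * p (g w4) y4)))))).
    apply: eq_sw => b y4; rewrite gM_exchange // sw_mull; apply: eq_sw => w1 a'.
    rewrite sw_mull; apply: eq_sw => u1 u2; rewrite sw_mull; apply: eq_sw => b' y3.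
    by rewrite sw_mull.
  by rewrite sw_swap; apply: eq_sw => w1 a'; rewrite sw_swap.
rewrite (coassoc hV); last by linearity.
under eq_sw => w1 c do (rewrite (coassoc hV); last by linearity).
under eq_sw => w1 c do under eq_sw => u1 d do under eq_sw => u2 w4 do
  (rewrite (coassoc hV); last by linearity).
transitivity (sw DV w (fun w1 c => sw DV c (fun u1 d => sw DV y (fun b' e' => sw DV b' (fun y1 y2 =>
   p (g w1) y1 * f (g (u1 * y2)) *
   sw DV d (fun u2 w4 => sw DV e' (fun y3 y4 => p (g (SV u2)) y3 * p (g w4) y4))))))).
  apply: eq_sw => w1 c; apply: eq_sw => u1 d.
  rewrite sw_swap; apply: eq_sw => b' e'.
  under eq_sw => u2 w4 do rewrite sw_swap.
  rewrite sw_swap; apply: eq_sw => y1 y2.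
  rewrite sw_mulr; apply: eq_sw => u2 w4; rewrite sw_mulr; apply: eq_sw => y3 y4; ring.
apply: eq_sw => w1 c.
under eq_sw => u1 d do under eq_sw => b' e' do under eq_sw => y1 y2 do rewrite pg_conv_antipodel.
rewrite -(sw_counitr hV (f := fun z => sw DV y (fun y1 y2 => p (g w1) y1 * f (g (z * y2)))));
  last by linearity.
apply: eq_sw => u1 d.
rewrite -(sw_counitr hV (f := fun z => sw DV z (fun y1 y2 => p (g w1) y1 * f (g (u1 * y2)))));
  last by linearity.
rewrite sw_mull; apply: eq_sw => b' e'; rewrite !sw_mull; apply: eq_sw => y1 y2; ring.
Qed.

Definition ups x := sw DV x (fun x1 x2 => p (g x2) (SV x1)).
Definition th x := sw DV x (fun x1 x2 => p (g x1) (SV x2)).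
Definition thi x := sw DV x (fun x1 x2 => p (g (SV (SV x1))) x2).
Definition upsi x := sw DV x (fun x1 x2 => p (g (SV (SV x2))) x1).
Lemma linf_ups : linf ups. Proof. rewrite /ups; linearity. Qed.
Lemma linf_th : linf th. Proof. rewrite /th; linearity. Qed.
Lemma linf_thi : linf thi. Proof. rewrite /thi; linearity. Qed.
Lemma linf_upsi : linf upsi. Proof. rewrite /upsi; linearity. Qed.
#[local] Hint Resolve linf_ups linf_th linf_thi linf_upsi : linear.

(* [f (g 1)] is a slot for an extra factor: [ups_intertwine] and [th_intertwine] instantiate
   [f] with a multiplication by [g (S^2 _)]. *)
Lemma ups_expand (f : U -> k) x : linf f ->
  ups x * f (g 1) = sw DV x (fun c a => sw DV c (fun c1 c2 => sw DV a (fun w1 w2 =>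
     p (g w1) (SV c2) * f (g (w2 * SV c1))))).
Proof.
move=> hf; symmetry.
transitivity (sw DV x (fun c a => sw DV a (fun w1 w2 => sw DV c (fun c1 c2 =>
   f (g (SV c2 * w1)) * p (g w2) (SV c1))))).
  apply: eq_sw => c a; rewrite sw_swap.
  transitivity (sw DV a (fun w1 w2 => sw DV (SV c) (fun y1 y2 => p (g w1) y1 * f (g (w2 * y2))))).
    by apply: eq_sw => w1 w2; rewrite (comul_antipode hV) //; linearity.
  rewrite -pg_quasicomm //; apply: eq_sw => w1 w2; rewrite (comul_antipode hV) //; linearity.
under eq_sw => c a do rewrite sw_swap.
rewrite (coassoc hV); last by linearity.
under eq_sw => c1 z do (rewrite -(coassoc hV); last by linearity).
rewrite /ups sw_mull; apply: eq_sw => c1 z.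
transitivity (sw DV z (fun q w2 => eV q * p (g w2) (SV c1)) * f (g 1)); last first.
  by rewrite (sw_counitl hV (f := fun t => p (g t) (SV c1))) //; linearity.
rewrite sw_mull; apply: eq_sw => q w2.
rewrite -sw_mull (sw_antipodel hV (f := fun t => f (g t))); last by linearity.
ring.
Qed.

Lemma th_expand (f : U -> k) x : linf f ->
  th x * f (g 1) = sw DV x (fun a c => sw DV a (fun w1 w2 => sw DV c (fun c1 c2 =>
     f (g (SV c2 * w1)) * p (g w2) (SV c1)))).
Proof.
move=> hf; symmetry.
transitivity (sw DV x (fun a c => sw DV a (fun w1 w2 => sw DV c (fun c1 c2 =>
   p (g w1) (SV c2) * f (g (w2 * SV c1)))))).
  apply: eq_sw => a c.
  transitivity (sw DV a (fun w1 w2 => sw DV (SV c) (fun y1 y2 => f (g (y1 * w1)) * p (g w2) y2))).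
    by apply: eq_sw => w1 w2; rewrite (comul_antipode hV) //; linearity.
  rewrite pg_quasicomm //; apply: eq_sw => w1 w2; rewrite (comul_antipode hV) //; linearity.
rewrite (coassoc hV); last by linearity.
under eq_sw => w1 z do (rewrite -(coassoc hV); last by linearity).
rewrite /th sw_mull; apply: eq_sw => w1 z.
transitivity (sw DV z (fun q c2 => eV q * p (g w1) (SV c2)) * f (g 1)); last first.
  by rewrite (sw_counitl hV (f := fun t => p (g w1) (SV t))) //; linearity.
rewrite sw_mull; apply: eq_sw => q c2.
under eq_sw => w2 c1 do rewrite mulrC.
rewrite -sw_mull (sw_antipoder hV (f := fun t => f (g t))); last by linearity.
ring.
Qed.

Lemma ups_intertwine (f : U -> k) x : linf f ->
  sw DV x (fun a b => ups a * f (g b)) = sw DV x (fun a b => f (g (SV (SV a))) * ups b).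
Proof.
move=> hf; symmetry.
transitivity (sw DV x (fun a b => sw DV b (fun c a' => sw DV c (fun c1 c2 => sw DV a' (fun w1 w2 =>
     p (g w1) (SV c2) * f (g (w2 * SV (SV a * c1)))))))).
  apply: eq_sw => a b.
  have -> : f (g (SV (SV a))) * ups b = ups b * (fun m => f (m * g (SV (SV a)))) (g 1).
    by rewrite /= (g1 hg) mul1r mulrC.
  rewrite (ups_expand (f := fun m => f (m * g (SV (SV a)))) b); last by linearity.
  apply: eq_sw => c a'; apply: eq_sw => c1 c2; apply: eq_sw => w1 w2.
  by rewrite -(gM hg) (antipodeM hV) mulrA.
under eq_sw => a b do (rewrite (coassoc hV); last by linearity).
rewrite -(coassoc hV); last by linearity.
transitivity (sw DV x (fun q z => eV q * sw DV z (fun c2 a' => sw DV a' (fun w1 w2 =>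
     p (g w1) (SV c2) * f (g w2))))).
  apply: eq_sw => q z.
  rewrite (sw_antipodel hV (f := fun t => sw DV z (fun c2 a' => sw DV a' (fun w1 w2 =>
     p (g w1) (SV c2) * f (g (w2 * SV t)))))); last by linearity.
  by congr (_ * _); apply: eq_sw => c2 a'; apply: eq_sw => w1 w2; rewrite (antipode1 hV) mulr1.
rewrite (sw_counitl hV (f := fun z => sw DV z (fun c2 a' => sw DV a' (fun w1 w2 =>
     p (g w1) (SV c2) * f (g w2))))); last by linearity.
rewrite /ups; symmetry.
under eq_sw => a b do rewrite sw_mull.
by rewrite (coassoc hV); last by linearity.
Qed.

Lemma th_intertwine (f : U -> k) x : linf f ->
  sw DV x (fun a b => th a * f (g (SV (SV b)))) = sw DV x (fun a b => f (g a) * th b).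
Proof.
move=> hf.
transitivity (sw DV x (fun a b => sw DV a (fun a' c => sw DV a' (fun w1 w2 => sw DV c (fun c1 c2 =>
     f (g (SV (c2 * SV b) * w1)) * p (g w2) (SV c1)))))).
  apply: eq_sw => a b.
  have -> : th a * f (g (SV (SV b))) = th a * (fun m => f (g (SV (SV b)) * m)) (g 1).
    by rewrite /= (g1 hg) mulr1.
  rewrite (th_expand (f := fun m => f (g (SV (SV b)) * m)) a); last by linearity.
  apply: eq_sw => a' c; apply: eq_sw => w1 w2; apply: eq_sw => c1 c2.
  by rewrite -(gM hg) mulrA -(antipodeM hV).
rewrite (coassoc hV); last by linearity.
under eq_sw => a' z do under eq_sw => c b do rewrite sw_swap.
under eq_sw => a' z do (rewrite (coassoc hV); last by linearity).
under eq_sw => a' z do under eq_sw => c1 q do rewrite sw_swap.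
under eq_sw => a' z do rewrite sw_swap.
transitivity (sw DV x (fun a' z => sw DV a' (fun w1 w2 => sw DV z (fun c1 q =>
    f (g w1) * p (g w2) (SV c1) * eV q)))).
  apply: eq_sw => a' z; apply: eq_sw => w1 w2; apply: eq_sw => c1 q.
  rewrite (sw_antipoder hV (f := fun t => f (g (SV t * w1)) * p (g w2) (SV c1))); last by linearity.
  by rewrite (antipode1 hV) mul1r mulrC.
under eq_sw => a' z do under eq_sw => w1 w2 do
  (rewrite (sw_counitr hV (f := fun t => f (g w1) * p (g w2) (SV t))); last by linearity).
rewrite /th.
under [RHS]eq_sw => a b do rewrite sw_mulr.
by rewrite -(coassoc hV); last by linearity.
Qed.

Lemma upsi_ups x : sw DV x (fun a b => upsi a * ups b) = eV x.
Proof.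
rewrite /upsi.
under eq_sw => a b do rewrite sw_mull.
rewrite (coassoc hV); last by linearity.
under eq_sw => a1 z do
  (rewrite -(ups_intertwine (f := fun m => p m a1)); last by linearity).
rewrite /ups.
under eq_sw => a1 z do
  (under eq_sw => a2 b do rewrite sw_mull; rewrite (coassoc hV); last by linearity).
under eq_sw => a1 z do under eq_sw => c d' do (rewrite (_ : sw DV d' _ = p (g d') (a1 * SV c));
   [ | by rewrite pgMr; apply: eq_sw => d b; rewrite mulrC]).
rewrite -(coassoc hV (t := fun a1 c d' => p (g d') (a1 * SV c))); last by linearity.
under eq_sw => q d' do (rewrite (sw_antipoder hV (f := p (g d'))); last by linearity).
under eq_sw => q d' do rewrite pg1r.
by rewrite (sw_counitl hV (f := eV)) //; linearity.
Qed.

Lemma th_thi x : sw DV x (fun a b => th a * thi b) = eV x.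
Proof.
rewrite /thi.
under eq_sw => a b do rewrite sw_mulr.
rewrite -(coassoc hV); last by linearity.
under eq_sw => z b2 do
  (rewrite (th_intertwine (f := fun m => p m b2)); last by linearity).
rewrite /th.
under eq_sw => z b2 do
  (under eq_sw => a b1 do rewrite sw_mulr; rewrite -(coassoc hV); last by linearity).
under eq_sw => z b2 do under eq_sw => w' d do (rewrite (_ : sw DV w' _ = p (g w') (SV d * b2));
   [ | by rewrite pgMr; apply: eq_sw => a c; rewrite mulrC]).
rewrite (coassoc hV (t := fun w' d b2 => p (g w') (SV d * b2))); last by linearity.
under eq_sw => w' q do (rewrite (sw_antipodel hV (f := p (g w'))); last by linearity).
under eq_sw => w' q do rewrite pg1r mulrC.
by rewrite (sw_counitl hV (f := eV)) //; linearity.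
Qed.

Lemma pg_quasicomm_antipode w y c :
  sw DV w (fun w1 w2 => sw DV y (fun y1 y2 => sw DV c (fun c1 c2 =>
     p (g y1) (SV c2) * p (g w1) (SV c1) * p (g w2) y2))) =
  sw DV w (fun w1 w2 => sw DV y (fun y1 y2 => sw DV c (fun c1 c2 =>
     p (g w1) y1 * (p (g w2) (SV c2) * p (g y2) (SV c1))))).
Proof.
transitivity (sw DV w (fun w1 w2 => sw DV y (fun y1 y2 => p (g (y1 * w1)) (SV c) * p (g w2) y2))).
  apply: eq_sw => w1 w2; apply: eq_sw => y1 y2; rewrite pgMl (comul_antipode hV); last by linearity.
  by rewrite sw_mull.
rewrite (pg_quasicomm (f := fun m => p m (SV c))); last by linearity.
apply: eq_sw => w1 w2; apply: eq_sw => y1 y2; rewrite pgMl (comul_antipode hV); last by linearity.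
by rewrite sw_mulr.
Qed.

Lemma ups_pg_conj w x :
  sw DV w (fun w1 w2 => sw DV x (fun c1 z => sw DV z (fun m y2 =>
     p (g w1) (SV c1) * ups m * p (g w2) y2))) = eV w * ups x.
Proof.
transitivity (sw DV x (fun c1 z => sw DV z (fun m y2 => sw DV m (fun c2 y1 => sw DV w (fun w1 w2 =>
     p (g y1) (SV c2) * p (g w1) (SV c1) * p (g w2) y2))))).
  rewrite sw_swap; apply: eq_sw => c1 z; rewrite sw_swap; apply: eq_sw => m y2.
  rewrite /ups.
  under eq_sw => w1 w2 do rewrite sw_mulr sw_mull.
  rewrite sw_swap; apply: eq_sw => c2 y1; apply: eq_sw => w1 w2; ring.
under eq_sw => c1 z do (rewrite (coassoc hV); last by linearity).
rewrite -(coassoc hV); last by linearity.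
transitivity (sw DV x (fun c n => sw DV w (fun w1 w2 => sw DV n (fun y1 y2 => sw DV c (fun c1 c2 =>
     p (g y1) (SV c2) * p (g w1) (SV c1) * p (g w2) y2))))).
  apply: eq_sw => c n.
  under eq_sw => c1 c2 do rewrite sw_swap.
  rewrite sw_swap; apply: eq_sw => w1 w2; by rewrite sw_swap.
under eq_sw => c n do rewrite pg_quasicomm_antipode.
transitivity (sw DV x (fun c y => sw DV c (fun c1 c2 => sw DV y (fun y1 y2 =>
     p (g w) (SV c2 * y1) * p (g y2) (SV c1))))).
  apply: eq_sw => c y.
  rewrite sw_swap; under eq_sw => y1 y2 do rewrite sw_swap.
  rewrite sw_swap; apply: eq_sw => c1 c2; apply: eq_sw => y1 y2.
  by rewrite pgMr sw_mull; apply: eq_sw => w1 w2; ring.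
rewrite (coassoc hV); last by linearity.
under eq_sw => c1 z do (rewrite -(coassoc hV); last by linearity).
under eq_sw => c1 z do under eq_sw => q y2 do
  (rewrite (sw_antipodel hV (f := fun t => p (g w) t * p (g y2) (SV c1))); last by linearity).
under eq_sw => c1 z do
  (rewrite (sw_counitl hV (f := fun t => p (g w) 1 * p (g t) (SV c1))); last by linearity).
rewrite /ups sw_mulr; apply: eq_sw => c1 z.
by rewrite pg1r.
Qed.

Lemma pg_conv_antipoder w y c :
  sw DV w (fun w1 w2 => sw DV y (fun y1 y2 => p (g w1) y1 * (p (g (SV w2)) y2 * c)))
  = eV w * eV y * c.
Proof.
under eq_sw => w1 w2 do under eq_sw => y1 y2 do rewrite mulrA.
under eq_sw => w1 w2 do rewrite -sw_mull -pgMl.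
rewrite -sw_mull (sw_antipoder hV (f := fun t => p (g t) y)); last by linearity.
by rewrite pg1l.
Qed.

Lemma pg_ups_commute v x :
  sw DV x (fun x1 x2 => p (g v) x1 * ups x2) = sw DV x (fun x1 x2 => ups x1 * p (g (SV (SV v))) x2).
Proof.
transitivity (sw DV v (fun v' v3 => sw DV x (fun x' z =>
   sw DV v' (fun v1 v2 => sw DV x' (fun x1 c1 =>
   p (g v1) x1 * (p (g (SV v2)) c1 * sw DV z (fun m y2 => ups m * p (g (SV (SV v3))) y2))))))).
  rewrite -(sw_counitr hV (f := fun t => sw DV x (fun x1 x2 => p (g t) x1 * ups x2)) v);
    last by linearity.
  transitivity (sw DV v (fun v1 v' => sw DV x (fun x1 x2 => p (g v1) x1 *
     sw DV (SV (SV v')) (fun w1 w2 => sw DV x2 (fun c1 z => sw DV z (fun m y2 =>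
     p (g w1) (SV c1) * ups m * p (g w2) y2)))))).
    apply: eq_sw => v1 v'; rewrite sw_mull; apply: eq_sw => x1 x2.
    by rewrite ups_pg_conj (counit_antipode hV) (counit_antipode hV) -mulrA (mulrC (ups x2)).
  under eq_sw => v1 v' do under eq_sw => x1 x2 do
    (do 2 (rewrite (comul_antipode hV); last by linearity)).
  under eq_sw => v1 v' do under eq_sw => x1 x2 do under eq_sw => v2 v3 do under eq_sw => c1 z do
    under eq_sw => m y2 do rewrite pg_antipode2.
  under eq_sw => v1 v' do under eq_sw => x1 x2 do rewrite sw_mulr.
  under eq_sw => v1 v' do rewrite sw_swap.
  rewrite -(coassoc hV); last by linearity.
  apply: eq_sw => v' v3.
  under eq_sw => a1 a2 do under eq_sw => a b do
    (rewrite sw_mulr; under eq_sw => c1 z do rewrite sw_mulr).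
  under eq_sw => v1 v2 do (rewrite -(coassoc hV); last by linearity).
  rewrite sw_swap; apply: eq_sw => x' z; apply: eq_sw => v1 v2; apply: eq_sw => x1 c1.
  rewrite sw_mulr sw_mulr; apply: eq_sw => m y2; ring.
under eq_sw => v' v3 do under eq_sw => x' z do rewrite pg_conv_antipoder.
transitivity (sw DV v (fun v' v3 => eV v' * sw DV x (fun x' z =>
   eV x' * sw DV z (fun m y2 => ups m * p (g (SV (SV v3))) y2)))).
  apply: eq_sw => v' v3; rewrite sw_mulr; apply: eq_sw => x' z; ring.
rewrite (sw_counitl hV (f := fun t => sw DV x (fun x' z =>
  eV x' * sw DV z (fun m y2 => ups m * p (g (SV (SV t))) y2)))); last by linearity.
by rewrite (sw_counitl hV (f := fun t => sw DV t (fun m y2 => ups m * p (g (SV (SV v))) y2))) //;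
  linearity.
Qed.

Lemma ups_upsi x : sw DV x (fun a b => ups a * upsi b) = eV x.
Proof.
rewrite /upsi.
under eq_sw => a b do rewrite sw_mulr.
rewrite -(coassoc hV); last by linearity.
under eq_sw => z b2 do rewrite -pg_ups_commute.
rewrite /ups.
under eq_sw => z b2 do under eq_sw => x1 x2 do rewrite sw_mulr.
rewrite (coassoc hV); last by linearity.
under eq_sw => x1 n do (rewrite (coassoc hV); last by linearity).
under eq_sw => x1 n do under eq_sw => c d' do (rewrite (_ : sw DV d' _ = p (g d') (x1 * SV c));
   [ | by rewrite pgMr]).
rewrite -(coassoc hV (t := fun x1 c d' => p (g d') (x1 * SV c))); last by linearity.
under eq_sw => q d' do (rewrite (sw_antipoder hV (f := p (g d'))); last by linearity).
under eq_sw => q d' do rewrite pg1r.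
by rewrite (sw_counitl hV (f := eV)) //; linearity.
Qed.

Lemma th_pg_conj w x :
  sw DV w (fun w1 w2 => sw DV x (fun x1 n => sw DV n (fun m x4 =>
     p (g w1) x1 * th m * p (g w2) (SV x4)))) = eV w * th x.
Proof.
transitivity (sw DV x (fun y c => sw DV w (fun w1 w2 => sw DV y (fun y1 y2 => sw DV c (fun c1 c2 =>
     p (g w1) y1 * (p (g w2) (SV c2) * p (g y2) (SV c1))))))).
  rewrite sw_swap.
  transitivity (sw DV x (fun x1 n => sw DV n (fun m x4 => sw DV m (fun y2 c1 =>
     sw DV w (fun w1 w2 =>
     p (g w1) x1 * (p (g w2) (SV x4) * p (g y2) (SV c1))))))).
    apply: eq_sw => x1 n; rewrite sw_swap; apply: eq_sw => m x4; rewrite /th.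
    under eq_sw => w1 w2 do rewrite sw_mulr sw_mull.
    rewrite sw_swap; apply: eq_sw => y2 c1; apply: eq_sw => w1 w2; ring.
  under eq_sw => x1 n do (rewrite (coassoc hV); last by linearity).
  rewrite -(coassoc hV); last by linearity.
  apply: eq_sw => y c.
  under eq_sw => y1 y2 do rewrite sw_swap.
  rewrite sw_swap; apply: eq_sw => w1 w2; by rewrite sw_swap.
under eq_sw => y c do rewrite -pg_quasicomm_antipode.
transitivity (sw DV x (fun y c => sw DV y (fun y1 y2 => sw DV c (fun c1 c2 =>
     p (g y1) (SV c2) * p (g w) (y2 * SV c1))))).
  apply: eq_sw => y c.
  rewrite sw_swap; under eq_sw => y1 y2 do rewrite sw_swap.
  apply: eq_sw => y1 y2; apply: eq_sw => c1 c2.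
  by rewrite pgMr sw_mulr; apply: eq_sw => w1 w2; ring.
rewrite (coassoc hV); last by linearity.
under eq_sw => y1 z do (rewrite -(coassoc hV); last by linearity).
under eq_sw => y1 z do under eq_sw => q c2 do
  (rewrite (sw_antipoder hV (f := fun t => p (g y1) (SV c2) * p (g w) t)); last by linearity).
under eq_sw => y1 z do
  (rewrite (sw_counitl hV (f := fun t => p (g y1) (SV t) * p (g w) 1)); last by linearity).
rewrite /th sw_mulr; apply: eq_sw => y1 z.
by rewrite pg1r mulrC.
Qed.

Lemma pg_th_commute v x :
  sw DV x (fun x1 x2 => p (g (SV (SV v))) x1 * th x2) = sw DV x (fun x1 x2 => th x1 * p (g v) x2).
Proof.
symmetry.
transitivity (sw DV v (fun v1 v' => sw DV x (fun x' y' => sw DV x' (fun a1 m =>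
   p (g (SV (SV v1))) a1 * th m * sw DV v' (fun v2 v4 => sw DV y' (fun a3 b =>
      p (g (SV v2)) a3 * p (g v4) b)))))).
  rewrite -(sw_counitl hV (f := fun t => sw DV x (fun a b => th a * p (g t) b)) v);
    last by linearity.
  transitivity (sw DV v (fun v' v4 => sw DV x (fun a b =>
     sw DV (SV (SV v')) (fun w1 w2 => sw DV a (fun a1 n => sw DV n (fun m a3 =>
     p (g w1) a1 * th m * p (g w2) (SV a3)))) * p (g v4) b))).
    apply: eq_sw => v' v4; rewrite sw_mulr; apply: eq_sw => a b.
    by rewrite th_pg_conj (counit_antipode hV) (counit_antipode hV) mulrA.
  under eq_sw => v' v4 do under eq_sw => a b do
    (do 2 (rewrite (comul_antipode hV); last by linearity)).
  under eq_sw => v' v4 do under eq_sw => a b do under eq_sw => v1 v2 do under eq_sw => a1 n do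
    under eq_sw => m a3 do rewrite pg_antipode2.
  under eq_sw => v' v4 do under eq_sw => a b do
    (rewrite sw_mull; under eq_sw => v1 v2 do
       (rewrite sw_mull; under eq_sw => a1 n do rewrite sw_mull)).
  under eq_sw => v' v4 do rewrite sw_swap.
  rewrite (coassoc hV); last by linearity.
  apply: eq_sw => v1 v'.
  under eq_sw => v2 v4 do (rewrite (coassoc hV); last by linearity).
  under eq_sw => v2 v4 do under eq_sw => a1 o do (rewrite (coassoc hV); last by linearity).
  under eq_sw => v2 v4 do (rewrite -(coassoc hV); last by linearity).
  rewrite sw_swap; apply: eq_sw => x' y'.
  rewrite sw_swap; apply: eq_sw => a1 m.
  rewrite [RHS]sw_mulr; apply: eq_sw => v2 v4.
  by rewrite [RHS]sw_mulr; apply: eq_sw => a3 b; ring.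
under eq_sw => v1 v' do under eq_sw => x' y' do under eq_sw => a1 m do rewrite pg_conv_antipodel.
transitivity (sw DV v (fun v1 v' => sw DV x (fun x' y' => sw DV x' (fun a1 m =>
   p (g (SV (SV v1))) a1 * th m) * eV y') * eV v')).
  apply: eq_sw => v1 v'; rewrite sw_mull; apply: eq_sw => x' y'; rewrite sw_mull sw_mull.
  apply: eq_sw => a1 m; ring.
rewrite (sw_counitr hV (f := fun t => sw DV x (fun x' y' => sw DV x' (fun a1 m =>
   p (g (SV (SV t))) a1 * th m) * eV y'))); last by linearity.
by rewrite (sw_counitr hV (f := fun t => sw DV t (fun a1 m => p (g (SV (SV v))) a1 * th m))) //;
  linearity.
Qed.

Lemma thi_th x : sw DV x (fun a b => thi a * th b) = eV x.
Proof.
rewrite /thi.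
under eq_sw => a b do rewrite sw_mull.
rewrite (coassoc hV); last by linearity.
under eq_sw => a1 z do rewrite pg_th_commute.
rewrite /th.
under eq_sw => a1 z do under eq_sw => x1 x2 do rewrite sw_mull.
under eq_sw => a1 z do (rewrite (coassoc hV); last by linearity).
rewrite -(coassoc hV); last by linearity.
under eq_sw => w' o do rewrite sw_swap.
under eq_sw => w' o do under eq_sw => d x2 do (rewrite (_ : sw DV w' _ = p (g w') (SV d * x2));
   [ | by rewrite pgMr]).
under eq_sw => w' o do (rewrite (sw_antipodel hV (f := p (g w'))); last by linearity).
under eq_sw => w' o do rewrite pg1r mulrC.
by rewrite (sw_counitr hV (f := eV)) //; linearity.
Qed.

Lemma g_antipode2_ups x :
  g (SV (SV x)) = sw3 DV x (fun x1 x2 x3 => (ups x1 * upsi x3) *: g x2).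
Proof.
apply: linf_separates => f hf; rewrite linf_sw3Z //; symmetry; rewrite /sw3.
transitivity (sw DV x (fun z c2 => sw DV z (fun a c1 => ups a * f (g c1)) * upsi c2)).
  apply: eq_sw => z c2; rewrite sw_mull; apply: eq_sw => a c1; ring.
under eq_sw => z c2 do (rewrite (ups_intertwine (f := f)) //).
under eq_sw => z c2 do rewrite sw_mull.
rewrite (coassoc hV); last by linearity.
transitivity (sw DV x (fun a o => f (g (SV (SV a))) * eV o)).
  apply: eq_sw => a o; rewrite -ups_upsi sw_mulr; apply: eq_sw => c1 c2; ring.
by rewrite (sw_counitr hV (f := fun t => f (g (SV (SV t))))) //; linearity.
Qed.

Lemma g_antipode2_th x :
  g (SV (SV x)) = sw3 DV x (fun x1 x2 x3 => (thi x1 * th x3) *: g x2).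
Proof.
apply: linf_separates => f hf; rewrite linf_sw3Z //.
rewrite -(sw_counitl hV (f := fun t => f (g (SV (SV t))))); last by linearity.
transitivity (sw DV x (fun a c => sw DV a (fun a1 a2 => thi a1 * th a2 * f (g (SV (SV c)))))).
  by apply: eq_sw => a c; rewrite -sw_mull thi_th.
rewrite (coassoc hV); last by linearity.
transitivity (sw DV x (fun a1 z => thi a1 * sw DV z (fun a2 c => f (g a2) * th c))).
  apply: eq_sw => a1 z; rewrite -th_intertwine // sw_mulr; apply: eq_sw => a2 c; ring.
under eq_sw => a1 z do rewrite sw_mulr.
rewrite /sw3 -(coassoc hV); last by linearity.
by apply: eq_sw => n c; apply: eq_sw => a1 a2; ring.
Qed.
End Main.

Unset Implicit Arguments. Set Strict Implicit.

Theorem mainTheorem4 (k : fieldType) (U V : algType k)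
  (DU : U -> seq (U * U)) (eU : U -> k) (SU SUi : U -> U)
  (DV : V -> seq (V * V)) (eV : V -> k) (SV SVi : V -> V)
  (p : U -> V -> k) (g : V -> U)
  (hU : is_hopf DU eU SU SUi) (hV : is_hopf DV eV SV SVi)
  (hp : is_pairing DU eU DV eV p)
  (hg : is_hopf_map_cop DU eU SUi DV eV SV g)
  (hgm : forall (y : V) (m : U),
     g y * m = sw3 DU m (fun m1 m2 m3 => sw3 DV y (fun y1 y2 y3 =>
                 (p (SUi m1) y3 * p m3 y1) *: (m2 * g y2)))) :
  let th := fun x => sw DV x (fun x1 x2 => p (g x1) (SV x2)) in
  let thi := fun x => sw DV x (fun x1 x2 => p (g (SV (SV x1))) x2) in
  let ups := fun x => sw DV x (fun x1 x2 => p (g x2) (SV x1)) in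
  let upsi := fun x => sw DV x (fun x1 x2 => p (g (SV (SV x2))) x1) in
  (* (i) *)
  ((forall x, sw DV x (fun x1 x2 => th x1 * thi x2) = eV x
           /\ sw DV x (fun x1 x2 => thi x1 * th x2) = eV x)
   /\ (forall x, g (SV (SV x)) = sw3 DV x (fun x1 x2 x3 => (thi x1 * th x3) *: g x2)))
  /\
  (* (ii) *)
  ((forall x, sw DV x (fun x1 x2 => ups x1 * upsi x2) = eV x
           /\ sw DV x (fun x1 x2 => upsi x1 * ups x2) = eV x)
   /\ (forall x, g (SV (SV x)) = sw3 DV x (fun x1 x2 x3 => (ups x1 * upsi x3) *: g x2))).
Proof.
move=> th thi ups upsi; split; split=> x.
- by split; [exact: (th_thi hU hV hp hg hgm) | exact: (thi_th hU hV hp hg hgm)].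
- exact: (g_antipode2_th hU hV hp hg hgm).
- by split; [exact: (ups_upsi hU hV hp hg hgm) | exact: (upsi_ups hU hV hp hg hgm)].
- exact: (g_antipode2_ups hU hV hp hg hgm).
Qed.
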